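(* Let $L$ be an infinite set and consider the edgeless cube $Q_L$. There is a basic sequence $s$ that is convergent over $f_{\mathrm{solved}}$ whose concatenation with itself ($s$ followed by $s$) is not convergent over $f_{\mathrm{solved}}$. In particular, the basic sequences convergent over $f_{\mathrm{solved}}$ are not closed under concatenation.
   Context: Let $L$ be an infinite set, $-L=\{-r:r\in L\}$ a disjoint copy of $L$, and $0$ a new element; $L^\dagger=-L\cup\{0\}\cup L$ with $-(-r)=r$, $-0=0$. Adjoin $\pm\infty$ with $-(+\infty)=-\infty$ and set $\bar L^\dagger=L^\dagger\cup\{\pm\infty\}$. Points of $U=(\bar L^\dagger)^3$ have coordinates $x,y,z$. The edgeless cube $Q_L$ is the set of cells: points of $U$ with exactly one coordinate in $\{\pm\infty\}$. For $i\in\{x,y,z\}$, $\alpha\in\bar L^\dagger$, the quarter-turn twist $T_{i,\alpha}$ is the permutation of cells fixing every cell $p$ with $p_i\ne\alpha$ and acting on the others by $T_{x,\alpha}(\alpha,y,z)=(\alpha,-z,y)$, $T_{y,\alpha}(x,\alpha,z)=(z,\alpha,-x)$, $T_{z,\alpha}(x,y,\alpha)=(-y,x,\alpha)$. Basic twists are $T,T^2,T^3$ for quarter-turn twists $T$. A basic sequence is a sequence $\langle\sigma_\eta:\eta<\theta\rangle$ of basic twists of ordinal length $\theta$. A configuration is a map $f$ from cells to the six colors red, white, green, orange, yellow, blue together with a special value NaC; it is legal if it never takes value NaC. The solved configuration $f_{\mathrm{solved}}$ colors a cell red, blue, white, orange, green, yellow according as $x=+\infty$, $y=+\infty$, $z=+\infty$,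 $x=-\infty$, $y=-\infty$, $z=-\infty$. A twist $\sigma$ acts by $(\sigma f)(c)=f(\sigma^{-1}c)$. Applying $\langle\sigma_\eta:\eta<\theta\rangle$ to $f_0$ produces $f_{\eta+1}=\sigma_\eta f_\eta$, and for limit $\lambda\le\theta$, $f_\lambda(c)$ is the eventually constant value of $f_\eta(c)$ ($\eta<\lambda$) if it exists and NaC otherwise; $f_\theta$ is the terminal configuration. The sequence is convergent over $f_0$ if $f_\theta$ is legal. *)

From Stdlib Require Import ClassicalEpsilon List.
Set Implicit Arguments.

Inductive Ldag (L : Type) : Type := LNeg (r : L) | LZero | LPos (r : L).
Arguments LZero {L}.

Definition ldneg {L : Type} (a : Ldag L) : Ldag L :=
  match a with LNeg r => LPos r | LZero => LZero | LPos r => LNeg r end.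

Inductive Lbar (L : Type) : Type := Fin (a : Ldag L) | PInf | MInf.
Arguments PInf {L}.
Arguments MInf {L}.

Definition lbneg {L : Type} (a : Lbar L) : Lbar L :=
  match a with Fin b => Fin (ldneg b) | PInf => MInf | MInf => PInf end.

Definition point (L : Type) : Type := (Lbar L * Lbar L * Lbar L)%type.

Definition is_inf {L : Type} (a : Lbar L) : bool :=
  match a with Fin _ => false | _ => true end.

Definition b2n (b : bool) : nat := if b then 1 else 0.

Definition is_cell {L : Type} (p : point L) : Prop :=
  let '(x, y, z) := p in
  (b2n (is_inf x) + b2n (is_inf y) + b2n (is_inf z) = 1)%nat.

Inductive axis : Type := AxX | AxY | AxZ.

Definition coord {L : Type} (i : axis) (p : point L) : Lbar L :=
  let '(x, y, z) := p in match i with AxX => x | AxY => y | AxZ => z end.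

(* classical decision of equality (L is an arbitrary set) *)
Definition lbar_eqb {L : Type} (a b : Lbar L) : bool :=
  if excluded_middle_informative (a = b) then true else false.

Definition quarter {L : Type} (i : axis) (al : Lbar L) (p : point L) : point L :=
  if lbar_eqb (coord i p) al then
    let '(x, y, z) := p in
    match i with
    | AxX => (x, lbneg z, y)
    | AxY => (z, y, lbneg x)
    | AxZ => (lbneg y, x, z)
    end
  else p.

Definition quarter_inv {L : Type} (i : axis) (al : Lbar L) (p : point L) : point L :=
  if lbar_eqb (coord i p) al then
    let '(x, y, z) := p in
    match i with
    | AxX => (x, z, lbneg y)
    | AxY => (lbneg z, y, x)
    | AxZ => (y, lbneg x, z)
    end
  else p.

Inductive qpow : Type := Q1 | Q2 | Q3.
Definition qpow_nat (k : qpow) : nat := match k with Q1 => 1 | Q2 => 2 | Q3 => 3 end.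

Record btwist (L : Type) : Type := BT {
  bt_axis : axis;
  bt_level : Lbar L;
  bt_pow : qpow }.

Definition btwist_inv {L : Type} (s : btwist L) (p : point L) : point L :=
  Nat.iter (qpow_nat (bt_pow s)) (quarter_inv (bt_axis s) (bt_level s)) p.

Inductive color : Type := Red | White | Green | Orange | Yellow | Blue.
Inductive cval : Type := Col (c : color) | NaC.

(* configurations are defined on all of U; only their values on cells matter
   (twists preserve cells, and legality only looks at cells). *)
Definition config (L : Type) : Type := point L -> cval.

Definition legal {L : Type} (f : config L) : Prop :=
  forall p : point L, is_cell p -> f p <> NaC.

Definition f_solved {L : Type} : config L :=
  fun p => let '(x, y, z) := p in
  match x, y, z with
  | PInf, Fin _, Fin _ => Col Red
  | Fin _, PInf, Fin _ => Col Blue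
  | Fin _, Fin _, PInf => Col White
  | MInf, Fin _, Fin _ => Col Orange
  | Fin _, MInf, Fin _ => Col Green
  | Fin _, Fin _, MInf => Col Yellow
  | _, _, _ => NaC
  end.

Definition act {L : Type} (s : btwist L) (f : config L) : config L :=
  fun c => f (btwist_inv s c).

(* Basic sequences of ordinal length: a family of basic twists indexed by a
   (strictly) well-ordered type (isomorphic to a unique ordinal theta). *)
Record bseq (L : Type) : Type := BSeq {
  bs_idx : Type;
  bs_lt : bs_idx -> bs_idx -> Prop;
  bs_tw : bs_idx -> btwist L }.

Definition strict_wellorder {I : Type} (R : I -> I -> Prop) : Prop :=
  (forall a, ~ R a a) /\
  (forall a b c, R a b -> R b c -> R a c) /\
  (forall a b, R a b \/ a = b \/ R b a) /\
  well_founded R.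

Definition concat_lt {I J : Type} (R : I -> I -> Prop) (S : J -> J -> Prop)
  (u v : I + J) : Prop :=
  match u, v with
  | inl a, inl b => R a b
  | inl _, inr _ => True
  | inr _, inl _ => False
  | inr a, inr b => S a b
  end.

Definition bconcat {L : Type} (s t : bseq L) : bseq L :=
  @BSeq L (bs_idx s + bs_idx t)%type (concat_lt (@bs_lt L s) (@bs_lt L t))
    (fun u => match u with inl a => bs_tw s a | inr b => bs_tw t b end).

(* stages eta <= theta: Some a = stage a (< theta), None = theta *)
Definition stage_lt {I : Type} (R : I -> I -> Prop) (u v : option I) : Prop :=
  match u, v with
  | Some a, Some b => R a b
  | Some _, None => True
  | None, _ => False
  end.

Definition is_run {L : Type} (s : bseq L) (f0 : config L)
  (F : option (bs_idx s) -> config L) : Prop :=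
  let lt := stage_lt (@bs_lt L s) in
  forall x : option (bs_idx s),
    (* stage 0 *)
    ((forall y, ~ lt y x) -> F x = f0) /\
    (* successor stage a+1 *)
    (forall a, lt (Some a) x -> (forall y, ~ (lt (Some a) y /\ lt y x)) ->
       F x = act (bs_tw s a) (F (Some a))) /\
    (* limit stage *)
    ((exists y, lt y x) ->
     (forall a, lt (Some a) x -> exists y, lt (Some a) y /\ lt y x) ->
     forall c,
       let evconst v := exists y, lt y x /\
           forall z, (lt y z \/ y = z) -> lt z x -> F z c = v in
       (forall v, evconst v -> F x c = v) /\
       ((~ exists v, evconst v) -> F x c = NaC)).

Definition terminal {L : Type} (s : bseq L) (f0 g : config L) : Prop :=
  exists F, is_run s f0 F /\ F None = g.

Definition convergent {L : Type} (s : bseq L) (f0 : config L) : Prop :=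
  exists g, terminal s f0 g /\ legal g.

Definition infinite_type (L : Type) : Prop :=
  ~ exists l : list L, forall x : L, In x l.

(* Let s be the top face turned omega times followed by one turn of the middle slice
   x = 0.  Over the solved cube the face turns do nothing, so s converges to the
   solved cube with one slice turned.  In that configuration the top face carries a
   cross whose two arms have different colours (white along x, blue along y), so
   during the second copy of s every top cell (r, 0, +oo) with r <> 0 alternates
   between white and blue; at stage omega it has no eventual colour and becomes NaC,
   and the final slice turn does not touch it since its x-coordinate is not 0. *)

From Stdlib Require Import List Arith Lia ClassicalEpsilon FunctionalExtensionality.
Set Implicit Arguments.

Definition eventually_eq (u : nat -> cval) (v : cval) : Prop :=
  exists N, forall n, N <= n -> u n = v.

Definition limit_cval (u : nat -> cval) : cval :=
  match excluded_middle_informative (exists v, eventually_eq u v) with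
  | left H => proj1_sig (constructive_indefinite_description _ H)
  | right _ => NaC
  end.

Lemma eventually_eq_unique u v w : eventually_eq u v -> eventually_eq u w -> v = w.
Proof.
  intros [N HN] [M HM]. rewrite <- (HN (N + M)), (HM (N + M)); trivial; lia.
Qed.

Lemma limit_cval_eq u v : eventually_eq u v -> limit_cval u = v.
Proof.
  intros Hv. unfold limit_cval. destruct excluded_middle_informative as [H|H].
  - destruct (constructive_indefinite_description _ H) as [w Hw]; simpl.
    exact (eventually_eq_unique Hw Hv).
  - exfalso; apply H; exists v; exact Hv.
Qed.

Lemma limit_cval_NaC u : ~ (exists v, eventually_eq u v) -> limit_cval u = NaC.
Proof. intros H. unfold limit_cval. destruct excluded_middle_informative; tauto. Qed.

Lemma strict_wellorder_lt : strict_wellorder lt.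
Proof.
  split; [|split; [|split]].
  - exact Nat.lt_irrefl.
  - exact Nat.lt_trans.
  - intros a b; destruct (Nat.lt_total a b) as [H|[H|H]]; auto.
  - exact lt_wf.
Qed.

Lemma strict_wellorder_empty (I : Type) : (forall a b : I, a = b) ->
  strict_wellorder (fun _ _ : I => False).
Proof.
  intros Hsub. split; [|split; [|split]]; auto.
  intros a; constructor; intros b [].
Qed.

Lemma strict_wellorder_concat (I J : Type) (R : I -> I -> Prop) (S : J -> J -> Prop) :
  strict_wellorder R -> strict_wellorder S -> strict_wellorder (concat_lt R S).
Proof.
  intros (Rirr & Rtr & Rtot & Rwf) (Sirr & Str & Stot & Swf).
  assert (Hl : forall a, Acc (concat_lt R S) (inl a)).
  { intros a; induction (Rwf a) as [a _ IH].
    constructor; intros [a'|b'] H; [exact (IH a' H) | destruct H]. }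
  split; [|split; [|split]].
  - intros [a|b]; simpl; auto.
  - intros [a|b] [a'|b'] [a''|b'']; simpl; try tauto; eauto.
  - intros [a|b] [a'|b']; simpl; auto.
    + destruct (Rtot a a') as [H|[->|H]]; auto.
    + destruct (Stot b b') as [H|[->|H]]; auto.
  - intros [a|b]; [exact (Hl a)|].
    induction (Swf b) as [b _ IH].
    constructor; intros [a'|b'] H; [exact (Hl a') | exact (IH b' H)].
Qed.


Section Runs.
Variable L : Type.

Definition eventually_const (I : Type) (lt : option I -> option I -> Prop)
  (F : option I -> config L) (x : option I) (c : point L) (v : cval) : Prop :=
  exists y, lt y x /\ forall z, (lt y z \/ y = z) -> lt z x -> F z c = v.

Definition run_at (s : bseq L) (f0 : config L) (F : option (bs_idx s) -> config L)
  (x : option (bs_idx s)) : Prop :=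
  let lt := stage_lt (@bs_lt L s) in
  ((forall y, ~ lt y x) -> F x = f0) /\
  (forall a, lt (Some a) x -> (forall y, ~ (lt (Some a) y /\ lt y x)) ->
     F x = act (bs_tw s a) (F (Some a))) /\
  ((exists y, lt y x) ->
   (forall a, lt (Some a) x -> exists y, lt (Some a) y /\ lt y x) ->
   forall c,
     (forall v, eventually_const lt F x c v -> F x c = v) /\
     ((~ exists v, eventually_const lt F x c v) -> F x c = NaC)).

Lemma is_run_run_at s f0 F : is_run s f0 F <-> forall x, run_at s f0 F x.
Proof. reflexivity. Qed.

Lemma limit_clause_transfer (P Q : point L -> cval -> Prop) (w : config L) :
  (forall c v, P c v <-> Q c v) ->
  (forall c, (forall v, Q c v -> w c = v) /\ ((~ exists v, Q c v) -> w c = NaC)) ->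
  forall c, (forall v, P c v -> w c = v) /\ ((~ exists v, P c v) -> w c = NaC).
Proof.
  intros HPQ HQ c. destruct (HQ c) as [Hval Hnac]. split.
  - intros v Hv. apply Hval, HPQ, Hv.
  - intros Hn. apply Hnac. intros [v Hv]. apply Hn. exists v. apply HPQ, Hv.
Qed.

Section Concatenation.
Variables (s t : bseq L) (f0 : config L).
Variables (F : option (bs_idx s) -> config L) (G : option (bs_idx t) -> config L).
Hypotheses (HF : is_run s f0 F) (HG : is_run t (F None) G).

Local Notation ltS := (stage_lt (bs_lt s)).
Local Notation ltT := (stage_lt (bs_lt t)).
Local Notation ltC := (stage_lt (bs_lt (bconcat s t))).

Definition concat_run (x : option (bs_idx s + bs_idx t)) : config L :=
  match x with
  | Some (inl a) => F (Some a)
  | Some (inr b) => G (Some b)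
  | None => G None
  end.

Definition rstage (u : option (bs_idx t)) : option (bs_idx s + bs_idx t) := option_map inr u.

Lemma concat_stage_cases x : (exists a, x = Some (inl a)) \/ exists u, x = rstage u.
Proof.
  destruct x as [[a|b]|]; [left; eauto | right; now exists (Some b) | right; now exists None].
Qed.

Lemma concat_run_rstage u : concat_run (rstage u) = G u.
Proof. now destruct u. Qed.

Lemma rstage_inj u w : rstage u = rstage w -> u = w.
Proof. destruct u, w; simpl; congruence. Qed.

Lemma ltC_rstage u w : ltC (rstage u) (rstage w) <-> ltT u w.
Proof. now destruct u, w. Qed.

Lemma ltC_inl_rstage a u : ltC (Some (inl a)) (rstage u).
Proof. now destruct u. Qed.

Lemma not_ltC_rstage_inl u a : ~ ltC (rstage u) (Some (inl a)).
Proof. now destruct u. Qed.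

Lemma rstage_neq_inl u a : rstage u <> Some (inl a).
Proof. now destruct u. Qed.

Lemma run_at_concat_left (xS : option (bs_idx s)) xC :
  (forall y, ltC y xC <-> exists a, y = Some (inl a) /\ ltS (Some a) xS) ->
  concat_run xC = F xS ->
  run_at (bconcat s t) f0 concat_run xC.
Proof.
  intros Hpred Hval.
  assert (Hinl : forall a, ltC (Some (inl a)) xC <-> ltS (Some a) xS).
  { intros a. rewrite Hpred. split; [|eauto].
    intros (a' & Heq & H). now injection Heq as ->. }
  destruct (HF xS) as (Hzero & Hsucc & Hlim).
  unfold run_at; rewrite Hval; split; [|split].
  - intros Hnone. apply Hzero. intros [a|] Ha; [|destruct Ha].
    apply (Hnone (Some (inl a))), Hinl, Ha.
  - intros [a|b] Ha Hnone.
    + apply Hsucc; [apply Hinl, Ha|]. intros [a'|] [H1 H2]; [|destruct H2].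
      apply (Hnone (Some (inl a'))). split; [exact H1 | apply Hinl, H2].
    + apply Hpred in Ha as (a & Heq & _). discriminate.
  - intros [y Hy] Hcof. apply Hpred in Hy as (a0 & -> & Ha0).
    apply limit_clause_transfer with (Q := eventually_const ltS F xS).
    + intros c v. split.
      * intros (y & Hy & Hz). apply Hpred in Hy as (a & -> & Ha).
        exists (Some a); split; [exact Ha|].
        intros [a'|] Ha' Hlt; [|destruct Hlt].
        apply (Hz (Some (inl a'))); [|apply Hinl, Hlt].
        destruct Ha' as [H|H]; [left; exact H | right; congruence].
      * intros ([a|] & Ha & Hz); [|destruct Ha].
        exists (Some (inl a)); split; [apply Hinl, Ha|].
        intros z Hz1 Hz2. apply Hpred in Hz2 as (a' & -> & Ha').
        apply (Hz (Some a')); [|exact Ha'].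
        destruct Hz1 as [H|H]; [left; exact H | right; congruence].
    + apply Hlim; [exists (Some a0); exact Ha0|].
      intros a Ha. destruct (Hcof (inl a) (proj2 (Hinl a) Ha)) as (y & Hy1 & Hy2).
      apply Hpred in Hy2 as (a' & -> & Ha'). exists (Some a'); split; assumption.
Qed.

Lemma eventually_const_concat_right u b0 c v : ltT (Some b0) u ->
  eventually_const ltC concat_run (rstage u) c v <-> eventually_const ltT G u c v.
Proof.
  intros Hb0. split.
  - intros (y & Hy & Hz).
    destruct (concat_stage_cases y) as [(a & ->) | (w & ->)].
    + exists (Some b0); split; [exact Hb0|]. intros z _ Hz2.
      rewrite <- concat_run_rstage. apply Hz; [left; apply ltC_inl_rstage | apply ltC_rstage, Hz2].
    + exists w; split; [apply ltC_rstage, Hy|]. intros z Hz1 Hz2.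
      rewrite <- concat_run_rstage. apply Hz; [|apply ltC_rstage, Hz2].
      destruct Hz1 as [H|H]; [left; apply ltC_rstage, H | right; congruence].
  - intros (y & Hy & Hz). exists (rstage y); split; [apply ltC_rstage, Hy|].
    intros z Hz1 Hz2. destruct (concat_stage_cases z) as [(a & ->) | (w & ->)].
    + exfalso. destruct Hz1 as [H|H];
        [exact (not_ltC_rstage_inl _ _ H) | exact (rstage_neq_inl _ H)].
    + rewrite concat_run_rstage. apply Hz; [|apply ltC_rstage, Hz2].
      destruct Hz1 as [H|H]; [left; apply ltC_rstage, H | right; apply rstage_inj, H].
Qed.

Lemma run_at_concat_right u b0 : ltT (Some b0) u ->
  run_at (bconcat s t) f0 concat_run (rstage u).
Proof.
  intros Hb0. destruct (HG u) as (Hzero & Hsucc & Hlim).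
  unfold run_at; rewrite concat_run_rstage; split; [|split].
  - intros Hnone. exfalso. apply (Hnone (rstage (Some b0))), ltC_rstage, Hb0.
  - intros [a|b] Ha Hnone.
    + exfalso. apply (Hnone (rstage (Some b0))).
      split; [apply ltC_inl_rstage | apply ltC_rstage, Hb0].
    + change (Some (inr b)) with (rstage (Some b)) in *.
      rewrite concat_run_rstage. apply Hsucc; [apply ltC_rstage, Ha|].
      intros y [H1 H2]. apply (Hnone (rstage y)).
      split; apply ltC_rstage; assumption.
  - intros _ Hcof.
    apply limit_clause_transfer with (Q := eventually_const ltT G u).
    + intros c v. apply eventually_const_concat_right with b0; exact Hb0.
    + apply Hlim; [exists (Some b0); exact Hb0|].
      intros b Hb. destruct (Hcof (inr b)) as (y & Hy1 & Hy2).
      { change (ltC (rstage (Some b)) (rstage u)). apply ltC_rstage, Hb. }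
      destruct (concat_stage_cases y) as [(a & ->) | (w & ->)]; [destruct Hy1|].
      exists w. split; apply ltC_rstage; assumption.
Qed.

Lemma is_run_concat : is_run (bconcat s t) f0 concat_run.
Proof.
  apply is_run_run_at. intros x.
  destruct (concat_stage_cases x) as [(a & ->) | (u & ->)].
  - apply run_at_concat_left with (xS := Some a); [|reflexivity].
    intros y. destruct (concat_stage_cases y) as [(a' & ->) | (w & ->)].
    + split; [eauto|]. intros (a'' & Heq & H). now injection Heq as ->.
    + split; [intros H; destruct (not_ltC_rstage_inl _ _ H)|].
      intros (a' & Heq & _). destruct (rstage_neq_inl _ Heq).
  - destruct (classic (exists b0, ltT (Some b0) u)) as [(b0 & Hb0) | Hfirst].
    + exact (run_at_concat_right _ _ Hb0).
    + (* u is the first stage of t: it comes right after all of s, and G u = F None *)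
      apply run_at_concat_left with (xS := None).
      * intros y. destruct (concat_stage_cases y) as [(a & ->) | (w & ->)].
        -- split; [intros _; now exists a | intros _; apply ltC_inl_rstage].
        -- split; [|intros (a & Heq & _); destruct (rstage_neq_inl _ Heq)].
           intros H. apply ltC_rstage in H. destruct w as [b|]; [|destruct H].
           exfalso; apply Hfirst; exists b; exact H.
      * rewrite concat_run_rstage. apply (HG u). intros [b|] H; [|destruct H].
        apply Hfirst; exists b; exact H.
Qed.

End Concatenation.

Lemma terminal_bconcat (s t : bseq L) f0 g h :
  terminal s f0 g -> terminal t g h -> terminal (bconcat s t) f0 h.
Proof.
  intros (F & HF & <-) (G & HG & <-).
  exists (concat_run _ _ F G); split; [exact (is_run_concat HF HG) | reflexivity].
Qed.

End Runs.

Section Omega.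
Variable L : Type.

Definition omega_seq (sigma : nat -> btwist L) : bseq L := @BSeq L nat lt sigma.

Fixpoint omega_stage (sigma : nat -> btwist L) (f0 : config L) (n : nat) : config L :=
  match n with
  | 0 => f0
  | S n => act (sigma n) (omega_stage sigma f0 n)
  end.

Definition omega_limit (sigma : nat -> btwist L) (f0 : config L) : config L :=
  fun c => limit_cval (fun n => omega_stage sigma f0 n c).

Definition omega_run sigma f0 (x : option nat) : config L :=
  match x with Some n => omega_stage sigma f0 n | None => omega_limit sigma f0 end.

Lemma is_run_omega sigma f0 : is_run (omega_seq sigma) f0 (omega_run sigma f0).
Proof.
  apply is_run_run_at. intros [n|]; split; [| split | | split].
  - intros Hnone. destruct n as [|n]; [reflexivity|].
    exfalso; apply (Hnone (Some n)); simpl; lia.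
  - intros a Ha Hnone. simpl in Ha. destruct (Nat.eq_dec n (S a)) as [->|Hne]; [reflexivity|].
    exfalso; apply (Hnone (Some (S a))); simpl; lia.
  - intros [[m|] Hm] Hcof; [|destruct Hm]. exfalso.
    destruct n as [|n]; [simpl in Hm; lia|].
    destruct (Hcof n ltac:(simpl; lia)) as ([k|] & H1 & H2); simpl in *; [lia | destruct H2].
  - intros Hnone; exfalso; apply (Hnone (Some 0)); exact I.
  - intros a _ Hnone; exfalso; apply (Hnone (Some (S a))); simpl; split; [lia | exact I].
  - intros _ _.
    apply limit_clause_transfer
      with (Q := fun c => eventually_eq (fun n => omega_stage sigma f0 n c)).
    + intros c v. split.
      * intros ([N|] & Hlt & HN); [|destruct Hlt].
        exists N; intros m Hm. apply (HN (Some m)); [|exact I].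
        destruct (Nat.eq_dec N m) as [->|Hne]; [right; reflexivity | left; simpl; lia].
      * intros [N HN]. exists (Some N); split; [exact I|].
        intros [m|] Hm Hlt; [|destruct Hlt].
        apply HN. destruct Hm as [H|H]; [simpl in H; lia | injection H; lia].
    + intros c; split; [apply limit_cval_eq | apply limit_cval_NaC].
Qed.

Lemma terminal_omega sigma f0 : terminal (omega_seq sigma) f0 (omega_limit sigma f0).
Proof. exists (omega_run sigma f0); split; [apply is_run_omega | reflexivity]. Qed.

Lemma omega_limit_fixed sigma f : (forall n, act (sigma n) f = f) -> omega_limit sigma f = f.
Proof.
  intros Hfix. assert (Hstage : forall n, omega_stage sigma f n = f).
  { induction n as [|n IH]; simpl; [reflexivity | rewrite IH; apply Hfix]. }
  apply functional_extensionality; intros c. apply limit_cval_eq.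
  exists 0; intros n _; rewrite Hstage; reflexivity.
Qed.

Definition single_seq (tau : btwist L) : bseq L := @BSeq L unit (fun _ _ => False) (fun _ => tau).

Lemma terminal_single tau f0 : terminal (single_seq tau) f0 (act tau f0).
Proof.
  exists (fun x => match x with Some _ => f0 | None => act tau f0 end); split; [|reflexivity].
  apply is_run_run_at. intros [[]|]; split; [| split | | split].
  - reflexivity.
  - intros [] [].
  - intros [[[]|] []].
  - intros Hnone; exfalso; apply (Hnone (Some tt)); exact I.
  - intros [] _ _; reflexivity.
  - intros _ Hcof; exfalso. destruct (Hcof tt I) as ([[]|] & H1 & H2); contradiction.
Qed.

End Omega.

Section Cube.
Variable L : Type.

Lemma lbar_eqb_spec (a b : Lbar L) : lbar_eqb a b = true <-> a = b.
Proof. unfold lbar_eqb; destruct excluded_middle_informative; split; congruence. Qed.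

Lemma lbar_eqb_refl (a : Lbar L) : lbar_eqb a a = true.
Proof. now apply lbar_eqb_spec. Qed.

Lemma lbar_eqb_neq (a b : Lbar L) : a <> b -> lbar_eqb a b = false.
Proof. unfold lbar_eqb; destruct excluded_middle_informative; congruence. Qed.

Lemma is_inf_lbneg (a : Lbar L) : is_inf (lbneg a) = is_inf a.
Proof. now destruct a. Qed.

Lemma is_cell_quarter_inv i al (p : point L) : is_cell p -> is_cell (quarter_inv i al p).
Proof.
  destruct p as [[x y] z]. unfold quarter_inv.
  destruct (lbar_eqb _ al); [|trivial].
  destruct i; simpl; rewrite is_inf_lbneg; lia.
Qed.

Lemma is_cell_btwist_inv (s : btwist L) p : is_cell p -> is_cell (btwist_inv s p).
Proof.
  unfold btwist_inv. generalize (qpow_nat (bt_pow s)) as n.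
  induction n as [|n IH]; simpl; [trivial|]. intros Hp. apply is_cell_quarter_inv, IH, Hp.
Qed.

Lemma legal_act (s : btwist L) f : legal f -> legal (act s f).
Proof. intros Hf p Hp. apply Hf, is_cell_btwist_inv, Hp. Qed.

Lemma legal_solved : legal (@f_solved L).
Proof.
  intros [[x y] z] Hp.
  destruct x as [?| |], y as [?| |], z as [?| |]; simpl in *; discriminate || lia.
Qed.

Lemma btwist_inv_off_level (s : btwist L) p :
  coord (bt_axis s) p <> bt_level s -> btwist_inv s p = p.
Proof.
  intros Hp. unfold btwist_inv. generalize (qpow_nat (bt_pow s)) as n.
  induction n as [|n IH]; simpl; [reflexivity|].
  rewrite IH. unfold quarter_inv. rewrite lbar_eqb_neq by exact Hp. now destruct p as [[x y] z].
Qed.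

Lemma act_off_level (s : btwist L) f p :
  coord (bt_axis s) p <> bt_level s -> act s f p = f p.
Proof. intros Hp. unfold act. now rewrite btwist_inv_off_level. Qed.

Lemma solved_quarter_inv_face i al (p : point L) :
  is_inf al = true -> f_solved (quarter_inv i al p) = f_solved p.
Proof.
  intros Hal. destruct p as [[x y] z]. unfold quarter_inv.
  destruct (lbar_eqb _ al) eqn:E; [apply lbar_eqb_spec in E|reflexivity].
  destruct al as [?| |]; [discriminate| |]; destruct i; simpl in E; subst;
    repeat match goal with a : Lbar L |- _ => destruct a end; reflexivity.
Qed.

Lemma act_face_solved (s : btwist L) :
  is_inf (bt_level s) = true -> act s f_solved = f_solved.
Proof.
  intros Hface. apply functional_extensionality; intros p. unfold act, btwist_inv.
  generalize (qpow_nat (bt_pow s)) as n.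
  induction n as [|n IH]; simpl; [reflexivity|].
  rewrite solved_quarter_inv_face; assumption.
Qed.

Definition top_turn : btwist L := BT AxZ PInf Q1.
Definition middle_slice_turn : btwist L := BT AxX (Fin LZero) Q1.

Definition top_cross (f : config L) (c1 c2 : cval) : Prop :=
  forall a : Ldag L, a <> LZero ->
    f (Fin a, Fin LZero, PInf) = c1 /\ f (Fin LZero, Fin a, PInf) = c2.

Lemma top_cross_top_turn f c1 c2 : top_cross f c1 c2 -> top_cross (act top_turn f) c2 c1.
Proof.
  intros Hf a Ha. unfold act, btwist_inv; simpl; unfold quarter_inv; simpl.
  rewrite lbar_eqb_refl. split.
  - apply (Hf (ldneg a)). destruct a; simpl; congruence.
  - apply (Hf a Ha).
Qed.

Lemma top_cross_middle_slice :
  top_cross (act middle_slice_turn f_solved) (Col White) (Col Blue).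
Proof.
  intros a Ha. split.
  - rewrite act_off_level; [now destruct a | simpl; congruence].
  - unfold act, btwist_inv; simpl; unfold quarter_inv; simpl.
    rewrite lbar_eqb_refl. now destruct a.
Qed.

Lemma omega_top_turns_NaC f c1 c2 a : top_cross f c1 c2 -> c1 <> c2 -> a <> LZero ->
  omega_limit (fun _ => top_turn) f (Fin a, Fin LZero, PInf) = NaC.
Proof.
  intros Hf Hc Ha.
  assert (Hcross : forall n, exists d1 d2, d1 <> d2 /\
            top_cross (omega_stage (fun _ => top_turn) f n) d1 d2).
  { induction n as [|n (d1 & d2 & Hd & Hn)]; [now exists c1, c2|].
    exists d2, d1; split; [congruence | apply top_cross_top_turn, Hn]. }
  apply limit_cval_NaC. intros [v [N HN]].
  destruct (Hcross N) as (d1 & d2 & Hd & HcN).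
  apply Hd. rewrite <- (proj1 (HcN a Ha)), <- (proj1 (top_cross_top_turn HcN Ha)).
  transitivity v; [apply HN; lia | symmetry; apply (HN (S N)); lia].
Qed.

End Cube.

Lemma infinite_type_inhabited (L : Type) : infinite_type L -> inhabited L.
Proof.
  intros HL. apply NNPP. intros Hempty. apply HL. exists nil.
  intros x. exact (Hempty (inhabits x)).
Qed.

Theorem mainTheorem10 (L : Type) (HL : infinite_type L) :
  exists s : bseq L,
    strict_wellorder (bs_lt s) /\
    convergent s f_solved /\
    exists g : config L, terminal (bconcat s s) f_solved g /\ ~ legal g.
Proof.
  destruct (infinite_type_inhabited HL) as [r].
  set (spin_top := omega_limit (fun _ => top_turn L)).
  set (s := bconcat (omega_seq (fun _ => top_turn L)) (single_seq (middle_slice_turn L))).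
  assert (Hs : forall f0, terminal s f0 (act (middle_slice_turn L) (spin_top f0))).
  { intros f0. apply terminal_bconcat with (spin_top f0).
    - apply terminal_omega.
    - apply terminal_single. }
  assert (Hsolved : spin_top f_solved = f_solved).
  { apply omega_limit_fixed. intros _. apply act_face_solved. reflexivity. }
  exists s; split; [|split].
  - apply strict_wellorder_concat; [apply strict_wellorder_lt|].
    apply strict_wellorder_empty. intros [] []. reflexivity.
  - eexists; split; [apply Hs|]. rewrite Hsolved. apply legal_act, legal_solved.
  - eexists; split; [eapply terminal_bconcat; apply Hs|]. intros Hlegal.
    apply (Hlegal (Fin (LPos r), Fin LZero, PInf)); [reflexivity|].
    rewrite act_off_level by (simpl; congruence). rewrite Hsolved.
    apply omega_top_turns_NaC with (Col White) (Col Blue); try congruence.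
    apply top_cross_middle_slice.
Qed.
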